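(* In a molecule-wall system, let $\mu$ be the stationary probability measure of $P$ given by the microcanonical (case of a rigid wall) or Gibbs canonical (case of a wall with moving parts at parameter $\beta$) distribution as described in the context, and suppose the system is symmetric. Then $P$, acting on functions by $(Pf)(s)=\int f(\pi(T(s,y)))\,d\eta(y)$, is a self-adjoint operator of norm $1$ on $L^2(N_{\rm mol},\mu)$.
   Context: Molecule-wall system: $M$ is a smooth Riemannian manifold with corners and $U:M\to\mathbb R$ a smooth potential; motions follow Newton's equation with specular reflection at the boundary. $M_{\rm wall}$, $\overline M_{\rm mol}$ are Riemannian manifolds, $k\ge0$; near and beyond the hypersurface $S=\overline M_{\rm mol}\times\{0\}\times\mathbb T^k\times M_{\rm wall}$ the manifold $M$ is the Riemannian product $\overline M_{\rm mol}\times(a,\infty)\times\mathbb T^k\times M_{\rm wall}$ and $U$ splits as a sum of a molecule and a wall potential. $N_S^+$ (tangent vectors at points of $S$ pointing into the interaction zone $\{d<0\}$) decomposes as $N_{\rm mol}\times\mathbb T^k\times N_{\rm wall}$, $N_{\rm wall}=TM_{\rm wall}$, $N_{\rm mol}=T\overline M_{\rm mol}\times\mathbb H$ ($\mathbb H$ the half-space of incoming center-of-mass velocities); $\pi:N_S^+\to N_{\rm mol}$ is the projection. $T:N_S^+\to N_S^+$ is the return map (flow until the next outward crossing of $S$, then reflection of the normal component), assumed smooth on an open dense full-measure set. $\eta$ is a probability on $\mathbb T^k\times N_{\rm wall}$: normalized Lebesgue measure on $\mathbb T^k$ if $M_{\rm wall}$ is a point, otherwise that times the Gibbs distribution $Z^{-1}e^{-\beta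 E}|\Omega^E_{\rm wall}\wedge dE|$ on $N_{\rm wall}$. $P$ acts on measures by $\mu P=(\pi\circ T)_*(\mu\otimes\eta)$; $\mu$ is the corresponding stationary measure (microcanonical, resp. Gibbs with the same $\beta$, projected to $N_{\rm mol}$), so that $\mu\otimes\eta$ is $T$-invariant. The system is symmetric if there are measurable automorphisms $\tilde J,\tilde S$ of $N_S^+$ such that (i) they preserve the invariant measure $\mu\otimes\eta$ (the natural measure derived from the symplectic structure); (ii) $\pi\circ\tilde J=\pi\circ\tilde S=J\circ\pi$ for a single map $J:N_{\rm mol}\to N_{\rm mol}$; (iii) $\tilde J\circ T=T^{-1}\circ\tilde J$ and $\tilde S\circ T=T\circ\tilde S$. *)

From HB Require Import structures.
From mathcomp Require Import all_boot all_order all_algebra.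
From mathcomp Require Import all_classical all_reals all_analysis.
Set Implicit Arguments. Unset Strict Implicit. Unset Printing Implicit Defensive.
Import Order.TTheory GRing.Theory Num.Theory.
Local Open Scope classical_set_scope.
Local Open Scope ring_scope.

Definition measure_preserving d (T : measurableType d) (R : realType)
  (m : set T -> \bar R) (F : T -> T) : Prop :=
  measurable_fun setT F /\
  forall A, measurable A -> m (F @^-1` A) = m A.

Definition measure_automorphism d (T : measurableType d) (R : realType)
  (m : set T -> \bar R) (F : T -> T) : Prop :=
  measure_preserving m F /\
  exists G : T -> T, measurable_fun setT G /\ cancel F G /\ cancel G F.

Definition L2fun d (T : measurableType d) (R : realType)
  (mu : {measure set T -> \bar R}) (f : T -> R) : Prop :=
  measurable_fun setT f /\ finite_norm mu 2%:E f.

Definition L2dot d (T : measurableType d) (R : realType)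
  (mu : {measure set T -> \bar R}) (f g : T -> R) : R :=
  Rintegral mu setT (fun x => f x * g x).

(** The transition operator acting on functions on N_mol = X, where
    N_S^+ = X * Y with Y = T^k x N_wall, and pi = fst:
    (P f)(s) = \int f (pi (T (s, y))) d eta(y). *)
Definition transition_op d1 d2 (X : measurableType d1) (Y : measurableType d2)
  (R : realType) (eta : {measure set Y -> \bar R}) (T : X * Y -> X * Y)
  (f : X -> R) : X -> R :=
  fun s => Rintegral eta setT (fun y => f (T (s, y)).1).

Definition L2_opnorm d (X : measurableType d) (R : realType)
  (mu : {measure set X -> \bar R}) (P : (X -> R) -> (X -> R)) : \bar R :=
  ereal_inf [set c%:E | c in [set c : R | 0 <= c /\
     forall f, L2fun mu f ->
       ('N[mu]_(2%:E)[EFin \o P f] <= c%:E * 'N[mu]_(2%:E)[EFin \o f])%E]].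

Definition L2_selfadjoint d (X : measurableType d) (R : realType)
  (mu : {measure set X -> \bar R}) (P : (X -> R) -> (X -> R)) : Prop :=
  (forall f, L2fun mu f -> L2fun mu (P f)) /\
  (forall f g, L2fun mu f -> L2fun mu g -> L2dot mu (P f) g = L2dot mu f (P g)).

(** Write [m] for the invariant measure [mu \x eta] on [X * Y] and [pi] for
    the first projection.  By Fubini, [<P f, g> = \int[m] f (pi (T z)) g (pi z)].
    Substituting [z := Jt w], which turns [T] into [T^-1], then [w := T u],
    and finally [u := St v], which commutes with [T], exchanges the roles of
    [f] and [g]; both substitutions preserve [m] and act on [pi] through the
    same map [J].  For the norm, Jensen's inequality gives
    [(P f s)^2 <= \int[eta] f (pi (T (s, y)))^2], and integrating in [s]
    against [mu] yields [||P f||^2 <= ||f \o pi \o T||^2 = ||f||^2] by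
    invariance of [m] under [T]; the bound is attained at the constant [1],
    which [P] fixes. *)
From HB Require Import structures.
From mathcomp Require Import all_boot all_order all_algebra.
From mathcomp Require Import all_classical all_reals all_analysis measurable_realfun.
Import Order.TTheory GRing.Theory Num.Theory.
Set Implicit Arguments. Unset Strict Implicit. Unset Printing Implicit Defensive.
Local Open Scope classical_set_scope.
Local Open Scope ring_scope.

Section L2fun_basics.
Context (R : realType) (d : measure_display) (T : measurableType d).
Variable mu : {measure set T -> \bar R}.

Lemma Lnorm2E (f : T -> R) :
  ('N[mu]_(2%:E)[EFin \o f] = (\int[mu]_x (f x ^+ 2)%:E) `^ 2^-1)%E.
Proof.
rewrite unlock /=; congr (_ `^ _)%E; apply: eq_integral => x _.
by rewrite powR_mulrn // real_normK // num_real.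
Qed.

Lemma L2funE (f : T -> R) : L2fun mu f <-> f \in Lfun mu 2%:E.
Proof.
rewrite /L2fun; split; first by move=> [mf ff]; rewrite inE; apply/andP; split; rewrite inE.
by rewrite inE => /andP[]; rewrite !inE.
Qed.

Lemma L2fun_integrable_sqr (f : T -> R) : L2fun mu f ->
  mu.-integrable setT (EFin \o (fun x => f x ^+ 2)).
Proof. by move/L2funE; exact: Lfun2_integrable_sqr. Qed.

Lemma integrable_sqr_L2fun (f : T -> R) : measurable_fun setT f ->
  mu.-integrable setT (EFin \o (fun x => f x ^+ 2)) -> L2fun mu f.
Proof.
move=> mf /integrableP[_ fi]; split => //.
rewrite /finite_norm Lnorm2E; apply: poweR_lty.
rewrite (le_lt_trans _ fi) //; apply: ge0_le_integral => //.
- by move=> x _; rewrite lee_fin sqr_ge0.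
- by apply/measurable_EFinP; exact: measurable_funX.
- apply: measurableT_comp => //; apply/measurable_EFinP; exact: measurable_funX.
- by move=> x _ /=; rewrite lee_fin ger0_norm // sqr_ge0.
Qed.

Lemma L2fun_mul_integrable (f g : T -> R) : L2fun mu f -> L2fun mu g ->
  mu.-integrable setT (EFin \o (fun x => f x * g x)).
Proof. by move=> /L2funE Lf /L2funE Lg; apply/Lfun1_integrable/Lfun2_mul_Lfun1. Qed.

Lemma L2fun_integrable (f : T -> R) : mu setT \is a fin_num ->
  L2fun mu f -> mu.-integrable setT (EFin \o f).
Proof. by move=> mufin /L2funE Lf; apply/Lfun1_integrable/(Lfun_subset12 mufin). Qed.

End L2fun_basics.

Section transport.
Local Open Scope ereal_scope.
Context (R : realType) (dz dw : measure_display).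
Context (Z : measurableType dz) (W : measurableType dw).
Variables (m : {measure set Z -> \bar R}) (nu : {measure set W -> \bar R}).
Variable F : Z -> W.
Hypothesis mF : measurable_fun setT F.
Hypothesis mF_nu : forall A, measurable A -> m (F @^-1` A) = nu A.

Lemma ge0_integral_transport (h : W -> \bar R) : measurable_fun setT h ->
  (forall w, 0 <= h w) -> \int[m]_z h (F z) = \int[nu]_w h w.
Proof.
move=> mh h0.
have := ge0_integral_pushforward mF m measurableT mh (fun w _ => h0 w).
rewrite preimage_setT => <-.
by apply: eq_measure_integral => A mA _ /=; rewrite /pushforward mF_nu.
Qed.

Lemma integrable_transport (h : W -> \bar R) : nu.-integrable setT h ->
  m.-integrable setT (h \o F).
Proof.
move=> /integrableP[mh ih]; apply/integrableP; split; first exact: measurableT_comp.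
rewrite (ge0_integral_transport (h := abse \o h)) //=; exact: measurableT_comp.
Qed.

Lemma integral_transport (h : W -> \bar R) : nu.-integrable setT h ->
  \int[m]_z h (F z) = \int[nu]_w h w.
Proof.
move=> /[dup] /integrableP[mh _] ih; rewrite integralE [RHS]integralE.
rewrite -(ge0_integral_transport (h := h^\+)) //; last exact: measurable_funepos.
rewrite -(ge0_integral_transport (h := h^\-)) //; last exact: measurable_funeneg.
by congr (_ - _); apply: eq_integral => z _; rewrite ?funeposE ?funenegE.
Qed.

Lemma L2fun_transport (f : W -> R) : L2fun nu f -> L2fun m (f \o F).
Proof.
move=> /[dup] Lf [mf _]; apply: integrable_sqr_L2fun; first exact: measurableT_comp.
exact: integrable_transport (L2fun_integrable_sqr Lf).
Qed.

End transport.

Lemma sqr_Rintegral_le (R : realType) (d : measure_display) (T : measurableType d)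
    (P : probability T R) (g : T -> R) : measurable_fun setT g ->
  (((Rintegral P setT g) ^+ 2)%:E <= \int[P]_x (g x ^+ 2)%:E)%E.
Proof.
move=> mg.
have [sqr_fin|] := ltP (\int[P]_x (g x ^+ 2)%:E)%E +oo%E; last exact: le_trans (leey _).
have Lg : L2fun P g.
  apply: integrable_sqr_L2fun => //; apply/integrableP; split.
    by apply/measurable_EFinP; exact: measurable_funX.
  rewrite (le_lt_trans _ sqr_fin) //; apply: ge0_le_integral => //.
  - apply: measurableT_comp => //; apply/measurable_EFinP; exact: measurable_funX.
  - by apply/measurable_EFinP; exact: measurable_funX.
  - by move=> y _ /=; rewrite ger0_norm // sqr_ge0.
have int_fin : (\int[P]_x (g x)%:E)%E \is a fin_num.
  exact/integrable_fin_num/L2fun_integrable/Lg/fin_num_measure.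
(* the variance [E g^2 - (E g)^2] is nonnegative *)
have := variance_ge0 P g; move/L2funE: Lg => Lg.
rewrite varianceE // subre_ge0; last first.
  by rewrite unlock exprfctE; apply: integrable_fin_num => //; exact: Lfun2_integrable_sqr.
by rewrite !unlock exprfctE /Rintegral EFin_expe fineK.
Qed.

Section product_of_probabilities.
Context (R : realType) (d1 d2 : measure_display).
Context (X : measurableType d1) (Y : measurableType d2).
Variables (mu : probability X R) (eta : probability Y R).
Local Notation m := (mu \x eta)%E.

Lemma measure_preimage_fst A : measurable A -> m (fst @^-1` A) = mu A.
Proof.
move=> mA; rewrite -setXT product_measure1E // -[RHS]mule1.
by congr (_ * _)%E; exact: probability_setT.
Qed.

Lemma product_probability_fin_num : m setT \is a fin_num.
Proof. by rewrite -(preimage_setT fst) measure_preimage_fst // probability_setT. Qed.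

Lemma L2fun_fst (f : X -> R) : L2fun mu f -> L2fun m (fun z => f z.1).
Proof. exact: L2fun_transport measurable_fst measure_preimage_fst f. Qed.

End product_of_probabilities.

Section transition_operator.
Context (R : realType) (d1 d2 : measure_display).
Context (X : measurableType d1) (Y : measurableType d2).
Variables (mu : probability X R) (eta : probability Y R).
Local Notation m := (mu \x eta)%E.
Variable T : X * Y -> X * Y.
Hypothesis mpT : measure_preserving m T.
Local Notation P := (transition_op eta T).

Lemma L2fun_fst_comp (f : X -> R) : L2fun mu f -> L2fun m (fun z => f (T z).1).
Proof. by move=> Lf; have [mT hT] := mpT; exact: L2fun_transport mT hT _ (L2fun_fst eta Lf). Qed.

Lemma integrable_fst_comp (f : X -> R) : L2fun mu f ->
  m.-integrable setT (EFin \o (fun z => f (T z).1)).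
Proof.
move=> Lf; apply: L2fun_integrable (L2fun_fst_comp Lf).
exact: product_probability_fin_num.
Qed.

Lemma measurable_transition_op (f : X -> R) : L2fun mu f -> measurable_fun setT (P f).
Proof.
move=> Lf; apply: measurableT_comp (fine_measurable measurableT) _.
exact: measurable_fubini_F (integrable_fst_comp Lf).
Qed.

Lemma transition_op_cst (c : R) : P (cst c) = cst c.
Proof.
apply/funext => s; rewrite /transition_op /= Rintegral_cst // -[RHS]mulr1.
by congr (_ * _); exact: (congr1 fine (probability_setT eta)).
Qed.

Lemma Rintegral_mul_transition_op (g f : X -> R) : L2fun mu g -> L2fun mu f ->
  Rintegral mu setT (fun s => g s * P f s) =
  Rintegral m setT (fun z => g z.1 * f (T z).1).
Proof.
move=> Lg Lf; rewrite /Rintegral; congr fine.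
have iGF := L2fun_mul_integrable (L2fun_fst eta Lg) (L2fun_fst_comp Lf).
rewrite -(integral12_prod_meas1 iGF); apply: ae_eq_integral => //.
- apply/measurable_EFinP/measurable_funM; first by case: Lg.
  exact: measurable_transition_op.
- exact: measurable_fubini_F iGF.
- apply: filterS (ae_integrable1 (integrable_fst_comp Lf)) => s ifs _.
  rewrite /fubini_F /=; under eq_integral => y _ do rewrite EFinM.
  rewrite integralZl // /transition_op /Rintegral EFinM fineK //.
  exact: integrable_fin_num.
Qed.

Lemma integral_sqr_transition_op_le (f : X -> R) : L2fun mu f ->
  (\int[mu]_s ((P f s) ^+ 2)%:E <= \int[mu]_x (f x ^+ 2)%:E)%E.
Proof.
move=> Lf; have [mfT _] := L2fun_fst_comp Lf; have [mT hT] := mpT.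
pose G z := ((f (T z).1) ^+ 2)%:E.
have mG : measurable_fun setT G by apply/measurable_EFinP; exact: measurable_funX.
have G0 z : (0 <= G z)%E by rewrite lee_fin sqr_ge0.
have -> : (\int[mu]_x (f x ^+ 2)%:E = \int[mu]_s fubini_F eta G s)%E.
  rewrite -(fubini_tonelli1 G mG G0) /G.
  rewrite (integral_transport mT hT (L2fun_integrable_sqr (L2fun_fst eta Lf))).
  have mfst := measure_preimage_fst mu eta.
  by rewrite (integral_transport measurable_fst mfst (L2fun_integrable_sqr Lf)).
apply: ge0_le_integral => //.
- by move=> s _; rewrite lee_fin sqr_ge0.
- by apply/measurable_EFinP/measurable_funX/measurable_transition_op.
- exact: measurable_fun_fubini_tonelli_F.
- move=> s _; apply: sqr_Rintegral_le.
  exact: measurableT_comp mfT (pair1_measurable s).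
Qed.

Lemma L2fun_transition_op (f : X -> R) : L2fun mu f -> L2fun mu (P f).
Proof.
move=> Lf; have mPf := measurable_transition_op Lf.
have mPf2 : measurable_fun setT (EFin \o (fun x => P f x ^+ 2)).
  by apply/measurable_EFinP/measurable_funX.
apply: integrable_sqr_L2fun => //; apply/integrableP; split => //.
have sqr_fin : (\int[mu]_x (f x ^+ 2)%:E < +oo)%E.
  by rewrite ltey_eq integrable_fin_num // L2fun_integrable_sqr.
apply: le_lt_trans sqr_fin; apply: le_trans (integral_sqr_transition_op_le Lf).
apply: ge0_le_integral => //; first exact: measurableT_comp.
by move=> x _ /=; rewrite ger0_norm // sqr_ge0.
Qed.

Lemma Lnorm2_transition_op_le (f : X -> R) : L2fun mu f ->
  ('N[mu]_(2%:E)[EFin \o P f] <= 'N[mu]_(2%:E)[EFin \o f])%E.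
Proof.
move=> Lf; rewrite !Lnorm2E; apply: gt0_ler_poweR => //;
  last exact: integral_sqr_transition_op_le.
all: by rewrite in_itv /= leey andbT integral_ge0 // => x _; rewrite lee_fin sqr_ge0.
Qed.

End transition_operator.

Section symmetric_system.
Context (R : realType) (d1 d2 : measure_display).
Context (X : measurableType d1) (Y : measurableType d2).
Variables (mu : probability X R) (eta : probability Y R).
Local Notation m := (mu \x eta)%E.
Variables (T Tinv Jt St : X * Y -> X * Y) (J : X -> X).
Hypotheses (TK : cancel T Tinv) (TinvK : cancel Tinv T).
Hypothesis mpT : measure_preserving m T.
Hypotheses (autJ : measure_automorphism m Jt) (autS : measure_automorphism m St).
Hypotheses (Jt_fst : forall z, (Jt z).1 = J z.1) (St_fst : forall z, (St z).1 = J z.1).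
Hypotheses (Jt_reverses : forall z, Jt (T z) = Tinv (Jt z)).
Hypothesis (St_commutes : forall z, St (T z) = T (St z)).

Lemma integral_fst_comp_swap (f g : X -> R) : L2fun mu f -> L2fun mu g ->
  (\int[m]_z ((g z.1 * f (T z).1)%:E) = \int[m]_z ((f z.1 * g (T z).1)%:E))%E.
Proof.
move=> Lf Lg.
have [[mJ hJ] _] := autJ; have [[mS hS] _] := autS; have [mT hT] := mpT.
pose H z := (g z.1 * f (T z).1)%:E.
pose K w := (g (J w.1) * f (J (Tinv w).1))%:E.
pose M u := (g (T u).1 * f u.1)%:E.
have iH : m.-integrable setT H := L2fun_mul_integrable (L2fun_fst eta Lg) (L2fun_fst_comp mpT Lf).
have iM : m.-integrable setT M := L2fun_mul_integrable (L2fun_fst_comp mpT Lg) (L2fun_fst eta Lf).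
have HJ w : H (Jt w) = K w by rewrite /H /K -[in T _](TinvK w) Jt_reverses TinvK !Jt_fst.
have KT w : K (T w) = M (St w) by rewrite /K /M TK -St_commutes !St_fst.
have iK : m.-integrable setT K.
  exact: eq_integrable measurableT _ _ (fun w _ => HJ w) (integrable_transport mJ hJ iH).
transitivity (\int[m]_w K w)%E.
  by rewrite -(integral_transport mJ hJ iH); apply: eq_integral => w _; exact: HJ.
rewrite -(integral_transport mT hT iK).
transitivity (\int[m]_w M (St w))%E; first by apply: eq_integral => w _; exact: KT.
rewrite (integral_transport mS hS iM).
by apply: eq_integral => w _; rewrite /M mulrC.
Qed.

Lemma transition_op_selfadjoint : L2_selfadjoint mu (transition_op eta T).
Proof.
split=> [f|f g Lf Lg]; first exact: L2fun_transition_op.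
rewrite /L2dot (_ : (fun x => _ * g x) = (fun x => g x * transition_op eta T f x)).
  by rewrite !Rintegral_mul_transition_op // /Rintegral integral_fst_comp_swap.
by apply/funext => x; rewrite mulrC.
Qed.

End symmetric_system.

Lemma L2_opnorm_eq1 (R : realType) (d : measure_display) (X : measurableType d)
    (mu : probability X R) (P : (X -> R) -> X -> R) :
  (forall f, L2fun mu f ->
     ('N[mu]_(2%:E)[EFin \o P f] <= 'N[mu]_(2%:E)[EFin \o f])%E) ->
  P (cst 1) = cst 1 -> L2_opnorm mu P = 1%:E.
Proof.
move=> contraction P1.
have N1 : ('N[mu]_(2%:E)[EFin \o cst 1%R] = 1)%E.
  by rewrite Lnorm_cst1 -(poweR1r 2^-1); congr (_ `^ _)%E; exact: probability_setT.
apply/eqP; rewrite eq_le; apply/andP; split.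
  apply: ge_ereal_inf; exists 1%:E => //; exists 1 => //; split => // f Lf.
  by rewrite mul1e; exact: contraction.
apply: le_ereal_inf_tmp => _ [c [c0 Pc] <-].
have L1 : L2fun mu (cst (1 : R)).
  apply: integrable_sqr_L2fun => //.
  exact: (finite_measure_integrable_cst mu (1 ^+ 2) measurableT).
by have := Pc _ L1; rewrite P1 N1 mule1 lee_fin.
Qed.

Theorem theorem2 (R : realType) (d1 d2 : measure_display)
  (X : measurableType d1) (Y : measurableType d2)
  (mu : probability X R) (eta : probability Y R)
  (T Tinv : X * Y -> X * Y) (Jt St : X * Y -> X * Y) (J : X -> X) :
  (* T is an invertible measurable map preserving mu (x) eta *)
  measurable_fun setT Tinv -> cancel T Tinv -> cancel Tinv T ->
  measure_preserving (mu \x eta)%E T ->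
  (* symmetry of the system *)
  measure_automorphism (mu \x eta)%E Jt ->
  measure_automorphism (mu \x eta)%E St ->
  (forall z, (Jt z).1 = J z.1) ->
  (forall z, (St z).1 = J z.1) ->
  (forall z, Jt (T z) = Tinv (Jt z)) ->
  (forall z, St (T z) = T (St z)) ->
  L2_selfadjoint mu (transition_op eta T) /\
  L2_opnorm mu (transition_op eta T) = 1%:E.
Proof.
move=> _ TK TinvK mpT autJ autS Jt_fst St_fst Jt_reverses St_commutes; split.
  exact: transition_op_selfadjoint TK TinvK mpT autJ autS Jt_fst St_fst Jt_reverses St_commutes.
apply: L2_opnorm_eq1; first exact: Lnorm2_transition_op_le.
exact: transition_op_cst.
Qed.
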